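(* In the setting described in the context, write $c=\hat u_1\cdot\hat e_1$ and $s=\hat u_3\cdot\hat e_1$, and consider the conditions (EC1) $\lambda_1\sqrt{\lambda_3^2-1}\,s=-\lambda_3\sqrt{1-\lambda_1^2}\,c$; (EC2) $\lambda_1\sqrt{\lambda_3^2-1}\,c=-\lambda_3\sqrt{1-\lambda_1^2}\,s$; (EC3) $\sqrt{1-\lambda_1^2}\,s=-\sqrt{\lambda_3^2-1}\,c$; (EC4) $\sqrt{1-\lambda_1^2}\,c=-\sqrt{\lambda_3^2-1}\,s$. Then: if the red triple is a triple cluster of the first kind, (EC1) holds; if the green triple is a triple cluster of the first kind, (EC2) holds; if the red triple is a triple cluster of the second kind, (EC3) holds; if the green triple is a triple cluster of the second kind, (EC4) holds. In particular, if a triple cluster (red or green, of either kind) exists, at least one of (EC1)–(EC4) holds.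
   Context: Setting: Let $U$ be a real symmetric positive-definite $3\times3$ matrix with eigenvalues $0<\lambda_1<\lambda_2=1<\lambda_3$ and orthonormal eigenvectors $\hat u_1,\hat u_2,\hat u_3$. Let $\hat e_1,\hat e_2$ be orthonormal vectors orthogonal to $\hat u_2$, oriented so that $\hat u_1\cdot\hat e_1=\hat u_3\cdot\hat e_2$ and $\hat u_3\cdot\hat e_1=-\hat u_1\cdot\hat e_2$, and such that $V:=(-I+2\hat e_1\otimes\hat e_1)U(-I+2\hat e_1\otimes\hat e_1)=(-I+2\hat e_2\otimes\hat e_2)U(-I+2\hat e_2\otimes\hat e_2)$ satisfies $V\neq U$ ($U,V$ form compound domains with symmetry axes $\hat e_1,\hat e_2$). Austenite connections: for $\kappa=\pm1$ let $R_\kappa\in SO(3)$, $b_\kappa$, $\hat m_\kappa$ be the two solutions of $R_\kappa U-I=b_\kappa\otimes\hat m_\kappa$, given by $b_\kappa=\frac{\rho}{\sqrt{\lambda_3^2-\lambda_1^2}}(\lambda_3\sqrt{1-\lambda_1^2}\,\hat u_1+\kappa\lambda_1\sqrt{\lambda_3^2-1}\,\hat u_3)$, $\hat m_\kappa=\frac{\lambda_3-\lambda_1}{\rho\sqrt{\lambda_3^2-\lambda_1^2}}(-\sqrt{1-\lambda_1^2}\,\hat u_1+\kappa\sqrt{\lambda_3^2-1}\,\hat u_3)$ with $\rho\neq0$ normalizing $\hat m_\kappa$. Equivalently $U-R_\kappa^T=(R_\kappa^Tb_\kappa)\otimes\hat m_\kappa$. Twin connections (known): there are $Q^{(1)},Q^{(2)}\in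 SO(3)$ and nonzero scalars $\zeta,\eta$ with $Q^{(1)}V-U=\zeta\,U\hat e_2\otimes\hat e_1$ and $Q^{(2)}V-U=\eta\,U\hat e_1\otimes\hat e_2$. Triple clusters: the red triple is $(U,Q^{(1)}V,R_{+}^T)$ and the green triple is $(U,Q^{(2)}V,R_{-}^T)$. The red triple is a triple cluster of the first kind if $R_+^Tb_+\parallel U\hat e_2$ (all pairwise differences are then rank-one with parallel shear vectors), and of the second kind if $\hat m_+\parallel\hat e_1$ (all pairwise differences are then rank-one with a common normal). The green triple is of the first kind if $R_-^Tb_-\parallel U\hat e_1$, and of the second kind if $\hat m_-\parallel\hat e_2$. *)

From HB Require Import structures.
From mathcomp Require Import all_boot all_order all_algebra.
Set Implicit Arguments. Unset Strict Implicit. Unset Printing Implicit Defensive.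
Import Order.TTheory GRing.Theory Num.Theory.
Local Open Scope ring_scope.

Section Defs.
Variable R : rcfType.
Local Notation vec := 'cV[R]_3.
Local Notation mat := 'M[R]_3.

Definition dotv (u v : vec) : R := (u^T *m v) 0 0.

Definition tens (a b : vec) : mat := a *m b^T.

Definition parallel (a b : vec) : Prop :=
  exists k : R, a = k *: b \/ b = k *: a.

Definition is_rotation (Q : mat) : Prop := Q^T *m Q = 1%:M /\ \det Q = 1.

Definition rot180 (e : vec) : mat := - 1%:M + 2%:R *: tens e e.

(* b_kappa and m_kappa of the austenite connections (kappa = 1 or -1) *)
Definition bvec (l1 l3 rho kappa : R) (u1 u3 : vec) : vec :=
  (rho / Num.sqrt (l3 ^+ 2 - l1 ^+ 2)) *:
    ((l3 * Num.sqrt (1 - l1 ^+ 2)) *: u1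
     + (kappa * l1 * Num.sqrt (l3 ^+ 2 - 1)) *: u3).

Definition mvec (l1 l3 rho kappa : R) (u1 u3 : vec) : vec :=
  ((l3 - l1) / (rho * Num.sqrt (l3 ^+ 2 - l1 ^+ 2))) *:
    ((- Num.sqrt (1 - l1 ^+ 2)) *: u1
     + (kappa * Num.sqrt (l3 ^+ 2 - 1)) *: u3).

End Defs.

From HB Require Import structures.
From mathcomp Require Import all_boot all_order all_algebra.
From mathcomp Require Import ring.
Import Order.TTheory GRing.Theory Num.Theory.
Local Open Scope ring_scope.

Set Implicit Arguments.
Unset Strict Implicit.
Unset Printing Implicit Defensive.

(* Each triple-cluster condition says that some vector a is parallel to some
   vector e, with a != 0.  We exhibit an explicit y in span(u1, u3) with
   a . y = 0; parallelism then forces e . y = 0, and reading this off in the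
   coordinates c = u1 . e1, s = u3 . e1 gives the corresponding equation
   (e2 has coordinates -s, c by the orientation hypotheses).
   For the second kind a = m_kappa and y is the rotation of m_kappa by 90
   degrees in span(u1, u3).  For the first kind a = R_kappa^T b_kappa and the
   test vector is U y: since R_kappa U = I + b_kappa (x) m_kappa we get
   a . U y = |b_kappa|^2 (m_kappa . y) + b_kappa . y, and the choice of y
   makes this vanish because |b_kappa|^2 = rho^2. *)

Section DotProduct.
Variable R : rcfType.
Implicit Types (x y z : 'cV[R]_3) (A : 'M[R]_3).

Lemma dotvC x y : dotv x y = dotv y x.
Proof. by rewrite /dotv !mxE; apply: eq_bigr => i _; rewrite !mxE mulrC. Qed.

Lemma dotvDr x y z : dotv x (y + z) = dotv x y + dotv x z.
Proof. by rewrite /dotv mulmxDr mxE. Qed.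

Lemma dotvZr x y (k : R) : dotv x (k *: y) = k * dotv x y.
Proof. by rewrite /dotv -scalemxAr mxE. Qed.

Lemma dotvDl x y z : dotv (x + y) z = dotv x z + dotv y z.
Proof. by rewrite dotvC dotvDr !(dotvC z). Qed.

Lemma dotvZl x y (k : R) : dotv (k *: x) y = k * dotv x y.
Proof. by rewrite dotvC dotvZr dotvC. Qed.

Lemma dotv0l x : dotv 0 x = 0.
Proof. by rewrite /dotv trmx0 mul0mx mxE. Qed.

Lemma dotv_mulmxl A x y : dotv (A *m x) y = dotv x (A^T *m y).
Proof. by rewrite /dotv trmx_mul mulmxA. Qed.

Lemma parallel_dotv_eq0 x y z :
  x != 0 -> parallel x y -> dotv x z = 0 -> dotv y z = 0.
Proof.
move=> x_neq0 [k [xE|->]]; rewrite ?dotvZl; last by move->; rewrite mulr0.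
have k_neq0 : k != 0 by apply: contraNneq x_neq0 => k0; rewrite xE k0 scale0r.
by rewrite xE dotvZl => /eqP; rewrite mulf_eq0 (negbTE k_neq0) => /eqP.
Qed.

Lemma rotation_trmx_eq0 A x : is_rotation A -> A^T *m x = 0 -> x = 0.
Proof.
move=> [AtA _] Atx0; have AAt : A *m A^T = 1%:M by apply: mulmx1C.
by rewrite -[x]mul1mx -AAt -mulmxA Atx0 mulmx0.
Qed.

Lemma connection_dotv (P U : 'M[R]_3) b m x :
  P *m U - 1%:M = tens b m ->
  dotv (P^T *m b) (U *m x) = dotv b b * dotv m x + dotv b x.
Proof.
move=> /eqP; rewrite subr_eq => /eqP PU.
rewrite dotv_mulmxl trmxK mulmxA PU mulmxDl mul1mx /tens -mulmxA dotvDr.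
have -> : b *m (m^T *m x) = dotv m x *: b.
  by apply/matrixP => i j; rewrite !mxE big_ord1 (ord1 j) mulrC.
by rewrite dotvZr mulrC.
Qed.

End DotProduct.

Section OrthonormalPair.
Variables (R : rcfType) (u1 u3 : 'cV[R]_3).
Hypotheses (u1n : dotv u1 u1 = 1) (u3n : dotv u3 u3 = 1) (u13 : dotv u1 u3 = 0).
Local Notation comb a1 a3 := (a1 *: u1 + a3 *: u3).

Lemma dotv_comb (a1 a3 b1 b3 : R) :
  dotv (comb a1 a3) (comb b1 b3) = a1 * b1 + a3 * b3.
Proof.
rewrite !(dotvDl, dotvDr, dotvZl, dotvZr) u1n u3n u13 (dotvC u3) u13.
by ring.
Qed.

Lemma dotv_combl (a1 a3 : R) x :
  dotv (comb a1 a3) x = a1 * dotv u1 x + a3 * dotv u3 x.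
Proof. by rewrite dotvDl !dotvZl. Qed.

Lemma mulmx_comb (U : 'M[R]_3) (l1 l3 a1 a3 : R) :
  U *m u1 = l1 *: u1 -> U *m u3 = l3 *: u3 ->
  U *m comb a1 a3 = comb (l1 * a1) (l3 * a3).
Proof.
move=> Uu1 Uu3; rewrite mulmxDr -!scalemxAr Uu1 Uu3 !scalerA.
by rewrite [a1 * _]mulrC [a3 * _]mulrC.
Qed.

Lemma dotv_mvec_perp (l1 l3 rho kap : R) :
  dotv (mvec l1 l3 rho kap u1 u3)
       (comb (kap * Num.sqrt (l3 ^+ 2 - 1)) (Num.sqrt (1 - l1 ^+ 2))) = 0.
Proof. by rewrite /mvec dotvZl dotv_comb; ring. Qed.

Lemma second_kind_condition (l1 l3 rho kap : R) e :
  dotv (mvec l1 l3 rho kap u1 u3) (mvec l1 l3 rho kap u1 u3) = 1 ->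
  parallel (mvec l1 l3 rho kap u1 u3) e ->
  Num.sqrt (1 - l1 ^+ 2) * dotv u3 e
    = - (kap * Num.sqrt (l3 ^+ 2 - 1) * dotv u1 e).
Proof.
move=> mn par; have m_neq0 : mvec l1 l3 rho kap u1 u3 != 0.
  by apply: contra_eq_neq mn => ->; rewrite dotv0l eq_sym oner_neq0.
move: (parallel_dotv_eq0 m_neq0 par (dotv_mvec_perp l1 l3 rho kap)).
rewrite dotvC dotv_combl => /eqP; rewrite addr_eq0 => /eqP ->; ring.
Qed.

Variables (l1 l3 rho : R).
Hypotheses (l1_gt0 : 0 < l1) (l1_lt1 : l1 < 1) (l3_gt1 : 1 < l3)
  (rho_neq0 : rho != 0).
Local Notation sA := (Num.sqrt (1 - l1 ^+ 2)).
Local Notation sB := (Num.sqrt (l3 ^+ 2 - 1)).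
Local Notation sD := (Num.sqrt (l3 ^+ 2 - l1 ^+ 2)).

Let l3_gt0 : 0 < l3. Proof. exact: lt_trans l3_gt1. Qed.
Let l1_sqr_lt1 : l1 ^+ 2 < 1. Proof. by rewrite expr_lt1 // ltW. Qed.
Let l3_sqr_gt1 : 1 < l3 ^+ 2. Proof. by rewrite expr_gt1 // ltW. Qed.
Let sqr_sA : sA ^+ 2 = 1 - l1 ^+ 2.
Proof. by rewrite sqr_sqrtr // subr_ge0 ltW. Qed.
Let sqr_sB : sB ^+ 2 = l3 ^+ 2 - 1.
Proof. by rewrite sqr_sqrtr // subr_ge0 ltW. Qed.
Let l13_sqr : l1 ^+ 2 < l3 ^+ 2. Proof. exact: lt_trans l3_sqr_gt1. Qed.
Let sqr_sD : sD ^+ 2 = l3 ^+ 2 - l1 ^+ 2.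
Proof. by rewrite sqr_sqrtr // subr_ge0 ltW. Qed.
Let sD_neq0 : sD != 0.
Proof. by rewrite gt_eqF // sqrtr_gt0 subr_gt0. Qed.

Lemma dotv_bvec (kap : R) : kap ^+ 2 = 1 ->
  dotv (bvec l1 l3 rho kap u1 u3) (bvec l1 l3 rho kap u1 u3) = rho ^+ 2.
Proof.
move=> kap2; rewrite /bvec dotvZl dotvZr dotv_comb.
have -> : l3 * sA * (l3 * sA) + kap * l1 * sB * (kap * l1 * sB) = sD ^+ 2.
  transitivity (l3 ^+ 2 * sA ^+ 2 + kap ^+ 2 * l1 ^+ 2 * sB ^+ 2); first by ring.
  by rewrite kap2 sqr_sA sqr_sB sqr_sD; ring.
by field; rewrite sD_neq0.
Qed.

Lemma bvec_neq0 (kap : R) : kap ^+ 2 = 1 -> bvec l1 l3 rho kap u1 u3 != 0.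
Proof.
move=> kap2; apply: contra_neq (rho_neq0) => b0.
by apply/eqP; rewrite -sqrf_eq0 -(dotv_bvec kap2) b0 dotv0l.
Qed.

Lemma dotv_connection_perp (P U : 'M[R]_3) (kap : R) :
  kap ^+ 2 = 1 ->
  P *m U - 1%:M = tens (bvec l1 l3 rho kap u1 u3) (mvec l1 l3 rho kap u1 u3) ->
  dotv (P^T *m bvec l1 l3 rho kap u1 u3) (U *m comb (- kap * sB / l1) (sA / l3))
    = 0.
Proof.
move=> kap2 PU; rewrite (connection_dotv _ PU) dotv_bvec // /mvec /bvec.
rewrite !dotvZl !dotv_comb; field.
by rewrite sD_neq0 rho_neq0 !gt_eqF.
Qed.

Lemma first_kind_condition (U P : 'M[R]_3) (kap : R) e :
  U^T = U -> U *m u1 = l1 *: u1 -> U *m u3 = l3 *: u3 ->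
  is_rotation P -> kap ^+ 2 = 1 ->
  P *m U - 1%:M = tens (bvec l1 l3 rho kap u1 u3) (mvec l1 l3 rho kap u1 u3) ->
  parallel (P^T *m bvec l1 l3 rho kap u1 u3) (U *m e) ->
  l3 * sA * dotv u3 e = kap * l1 * sB * dotv u1 e.
Proof.
move=> Us Uu1 Uu3 Prot kap2 PU par.
have w_neq0 : P^T *m bvec l1 l3 rho kap u1 u3 != 0.
  by apply: contra_neq (bvec_neq0 kap2); apply: rotation_trmx_eq0 Prot.
move: (parallel_dotv_eq0 w_neq0 par (dotv_connection_perp kap2 PU)).
rewrite dotv_mulmxl Us dotvC !(mulmx_comb _ _ Uu1 Uu3) dotv_combl => orth.
apply: subr0_eq; rewrite -[RHS]orth; field.
by rewrite !gt_eqF.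
Qed.

End OrthonormalPair.

Unset Implicit Arguments.

Theorem mainTheorem6 (R : rcfType)
  (U : 'M[R]_3) (l1 l3 : R) (u1 u2 u3 e1 e2 : 'cV[R]_3)
  (rho zeta eta : R) (Rp Rm Q1 Q2 : 'M[R]_3) :
  U^T = U ->
  0 < l1 -> l1 < 1 -> 1 < l3 ->
  dotv u1 u1 = 1 -> dotv u2 u2 = 1 -> dotv u3 u3 = 1 ->
  dotv u1 u2 = 0 -> dotv u1 u3 = 0 -> dotv u2 u3 = 0 ->
  U *m u1 = l1 *: u1 -> U *m u2 = u2 -> U *m u3 = l3 *: u3 ->
  dotv e1 e1 = 1 -> dotv e2 e2 = 1 -> dotv e1 e2 = 0 ->
  dotv e1 u2 = 0 -> dotv e2 u2 = 0 ->
  dotv u1 e1 = dotv u3 e2 -> dotv u3 e1 = - dotv u1 e2 ->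
  rot180 e1 *m U *m rot180 e1 = rot180 e2 *m U *m rot180 e2 ->
  rot180 e1 *m U *m rot180 e1 <> U ->
  rho != 0 ->
  dotv (mvec l1 l3 rho 1 u1 u3) (mvec l1 l3 rho 1 u1 u3) = 1 ->
  dotv (mvec l1 l3 rho (-1) u1 u3) (mvec l1 l3 rho (-1) u1 u3) = 1 ->
  is_rotation Rp -> is_rotation Rm ->
  Rp *m U - 1%:M = tens (bvec l1 l3 rho 1 u1 u3) (mvec l1 l3 rho 1 u1 u3) ->
  Rm *m U - 1%:M = tens (bvec l1 l3 rho (-1) u1 u3) (mvec l1 l3 rho (-1) u1 u3) ->
  is_rotation Q1 -> is_rotation Q2 -> zeta != 0 -> eta != 0 ->
  Q1 *m (rot180 e1 *m U *m rot180 e1) - U = zeta *: tens (U *m e2) e1 ->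
  Q2 *m (rot180 e1 *m U *m rot180 e1) - U = eta *: tens (U *m e1) e2 ->
  let c := dotv u1 e1 in
  let s := dotv u3 e1 in
  let EC1 := l1 * Num.sqrt (l3 ^+ 2 - 1) * s = - (l3 * Num.sqrt (1 - l1 ^+ 2) * c) in
  let EC2 := l1 * Num.sqrt (l3 ^+ 2 - 1) * c = - (l3 * Num.sqrt (1 - l1 ^+ 2) * s) in
  let EC3 := Num.sqrt (1 - l1 ^+ 2) * s = - (Num.sqrt (l3 ^+ 2 - 1) * c) in
  let EC4 := Num.sqrt (1 - l1 ^+ 2) * c = - (Num.sqrt (l3 ^+ 2 - 1) * s) in
  let red_first := parallel (Rp^T *m bvec l1 l3 rho 1 u1 u3) (U *m e2) in
  let green_first := parallel (Rm^T *m bvec l1 l3 rho (-1) u1 u3) (U *m e1) in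
  let red_second := parallel (mvec l1 l3 rho 1 u1 u3) e1 in
  let green_second := parallel (mvec l1 l3 rho (-1) u1 u3) e2 in
  (red_first -> EC1) /\ (green_first -> EC2) /\
  (red_second -> EC3) /\ (green_second -> EC4) /\
  (red_first \/ green_first \/ red_second \/ green_second ->
     EC1 \/ EC2 \/ EC3 \/ EC4).
Proof.
move=> Us l1_gt0 l1_lt1 l3_gt1 u1n _ u3n _ u13 _ Uu1 _ Uu3 _ _ _ _ _ c_e2 s_e2
  _ _ rho_neq0 mpn mmn Rp_rot Rm_rot RpU RmU _ _ _ _ _ _
  c s EC1 EC2 EC3 EC4 red_first green_first red_second green_second.
suff : [/\ red_first -> EC1, green_first -> EC2, red_second -> EC3
  & green_second -> EC4] by case; tauto.
rewrite {}/red_first {}/green_first {}/red_second {}/green_second.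
rewrite {}/EC1 {}/EC2 {}/EC3 {}/EC4 {}/c {}/s.
have u1_e2 : dotv u1 e2 = - dotv u3 e1 by rewrite s_e2 opprK.
have sqrN1 : (-1 : R) ^+ 2 = 1 by rewrite sqrrN expr1n.
have first_kind := first_kind_condition u1n u3n u13 l1_gt0 l1_lt1 l3_gt1
  rho_neq0.
have second_kind := second_kind_condition u1n u3n u13.
have red1 := first_kind _ _ _ e2 Us Uu1 Uu3 Rp_rot (expr1n _ _) RpU.
have green1 := first_kind _ _ _ e1 Us Uu1 Uu3 Rm_rot sqrN1 RmU.
have red2 := second_kind _ _ _ _ e1 mpn.
have green2 := second_kind _ _ _ _ e2 mmn.
rewrite u1_e2 -c_e2 in red1 green2.
split.
- by move/red1 ->; ring.
- by move/green1 ->; ring.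
- by move/red2 ->; ring.
- by move/green2 ->; ring.
Qed.
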